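(* For every real number $r\ge 1$, the function $f_r:[0,1]\to\mathbb{R}$, \[ f_r(x)=\sum_{m\in\mathbb{Z}}\left|\frac{\sin(\pi(x+m))}{\pi(x+m)}\right|^{2r}, \] attains a global minimum on $[0,1]$ at $x=\tfrac12$; that is, $f_r(x)\ge f_r(\tfrac12)$ for all $x\in[0,1]$.
   Context: The summand $\frac{\sin(\pi y)}{\pi y}$ is interpreted as $1$ when $y=0$. The series converges absolutely for every $x\in\mathbb{R}$ and every $r\ge1$. *)

From Stdlib Require Import Reals.
From Coquelicot Require Import Coquelicot.
Open Scope R_scope.

Definition sinc (y : R) : R :=
  if Req_EM_T y 0 then 1 else sin (PI * y) / (PI * y).

(* a ^ p for a >= 0 and real p > 0, with the convention 0 ^ p = 0
   (Stdlib's Rpower 0 p would give 1). *)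
Definition rpow (a p : R) : R :=
  if Req_EM_T a 0 then 0 else Rpower a p.

Definition term (r y : R) : R := rpow (Rabs (sinc y)) (2 * r).

(* sum over m in Z, split as m >= 0 and m <= -1 (absolutely convergent) *)
Definition f_r (r x : R) : R :=
  Series (fun n : nat => term r (x + INR n))
  + Series (fun n : nat => term r (x - INR (S n))).

From Stdlib Require Import Reals Lra Lia.
From Coquelicot Require Import Coquelicot.
Open Scope R_scope.

(* With [u_k = sinc (x + k) ^ 2] and [v_k = sinc (1 - x + k) ^ 2] (the terms with [m >= 0]
   and [m < 0]), [f_r x = sum phi (u_k) + sum phi (v_k)] for the convex nondecreasing
   [phi w = w ^ r].  The expansion [sum_(m in Z) 1 / (x + m) ^ 2 = PI ^ 2 / sin (PI x) ^ 2],
   obtained by Herglotz's duplication trick, gives [sum u_k + sum v_k = 1] for every [x].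
   For [0 <= x <= 1/2], the sequence [u_0, v_0, u_1, v_1, ...] weakly majorizes the
   nonincreasing sequence [c_0, c_0, c_1, c_1, ...] with [c_k = sinc (1/2 + k) ^ 2]:
   [v_k <= c_k], [u_k + v_k <= 2 c_k] for [k >= 1], and both sum to [1].  The Tomic-Weyl
   inequality then yields [f_r (1/2) <= f_r x]; the case [x > 1/2] follows by [x |-> 1 - x]. *)

(* [psum a N] has exactly [N] terms, whereas Coquelicot's [sum_n a N] has [N + 1]. *)
Fixpoint psum (a : nat -> R) (N : nat) : R :=
  match N with O => 0 | S n => psum a n + a n end.

Lemma psum_ext a b N : (forall n, a n = b n) -> psum a N = psum b N.
Proof. intro H; induction N; simpl; [ring | rewrite IHN, H; ring]. Qed.

Lemma psum_le a b N : (forall n, a n <= b n) -> psum a N <= psum b N.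
Proof. intro H; induction N; simpl; [lra | specialize (H N); lra]. Qed.

Lemma psum_plus a b N : psum (fun n => a n + b n) N = psum a N + psum b N.
Proof. induction N; simpl; [ring | rewrite IHN; ring]. Qed.

Lemma psum_minus a b N : psum (fun n => a n - b n) N = psum a N - psum b N.
Proof. induction N; simpl; [ring | rewrite IHN; ring]. Qed.

Lemma is_lim_seq_psum a : ex_series a -> is_lim_seq (psum a) (Series a).
Proof.
  intro Ha. apply is_lim_seq_incr_1, (is_lim_seq_ext (sum_n a)).
  - intro n; induction n.
    + rewrite sum_O. symmetry; apply Rplus_0_l.
    + rewrite sum_Sn, IHn; reflexivity.
  - exact (Series_correct _ Ha).
Qed.

Lemma psum_le_Series a N : (forall n, 0 <= a n) -> ex_series a -> psum a N <= Series a.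
Proof.
  intros Ha0 Ha. apply is_lim_seq_incr_compare; [exact (is_lim_seq_psum a Ha) |].
  intro n; simpl; specialize (Ha0 n); lra.
Qed.

Lemma Series_le_bound a M : ex_series a -> (forall N, psum a N <= M) -> Series a <= M.
Proof.
  intros Ha HM.
  exact (is_lim_seq_le (psum a) (fun _ => M) (Series a) M HM (is_lim_seq_psum a Ha)
           (is_lim_seq_const M)).
Qed.

Lemma ex_series_psum_bounded a M :
  (forall n, 0 <= a n) -> (forall N, psum a N <= M) -> ex_series a.
Proof.
  intros Ha0 HM.
  assert (Hlim : ex_finite_lim_seq (sum_n a)).
  { apply ex_finite_lim_seq_incr with M.
    - intro n; rewrite sum_Sn; specialize (Ha0 (S n)); simpl; unfold plus; simpl; lra.
    - intro n. replace (sum_n a n) with (psum a (S n)); [apply HM |].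
      induction n; [rewrite sum_O; apply Rplus_0_l | rewrite sum_Sn, <- IHn; reflexivity]. }
  destruct Hlim as [l Hl]; exists l; exact Hl.
Qed.

Lemma Series_zero : Series (fun _ : nat => 0) = 0.
Proof.
  rewrite (Series_ext _ (fun _ : nat => 0 * 0)) by (intro; ring).
  rewrite Series_scal_l. ring.
Qed.

Lemma ex_series_nonneg_le a b : (forall n, 0 <= a n <= b n) -> ex_series b -> ex_series a.
Proof.
  intros Hab. apply (@ex_series_le R_AbsRing R_CompleteNormedModule). intro n.
  change (Rabs (a n) <= b n). rewrite Rabs_pos_eq; apply Hab.
Qed.

Lemma Series_plus_le_psum a b c d :
  ex_series a -> ex_series b -> ex_series c -> ex_series d ->
  (forall N, psum a N + psum b N <= psum c N + psum d N) ->
  Series a + Series b <= Series c + Series d.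
Proof.
  intros Ha Hb Hc Hd H.
  exact (is_lim_seq_le _ _ _ _ H
           (is_lim_seq_plus' _ _ _ _ (is_lim_seq_psum a Ha) (is_lim_seq_psum b Hb))
           (is_lim_seq_plus' _ _ _ _ (is_lim_seq_psum c Hc) (is_lim_seq_psum d Hd))).
Qed.

Lemma is_lim_seq_psum_le_of_nonpos_tail e (l : R) :
  is_lim_seq (psum e) l -> (forall k, (1 <= k)%nat -> e k <= 0) ->
  forall N, (1 <= N)%nat -> l <= psum e N.
Proof.
  intros He Hneg N HN. destruct N as [|N]; [lia |].
  apply (is_lim_seq_decr_compare (fun n => psum e (S n))).
  - apply (is_lim_seq_incr_1 (psum e)), He.
  - intro n. simpl. specialize (Hneg (S n) ltac:(lia)). lra.
Qed.

Lemma Series_parity_split u :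
  ex_series (fun n => u (2 * n)%nat) -> ex_series (fun n => u (S (2 * n))) ->
  ex_series u ->
  Series u = Series (fun n => u (2 * n)%nat) + Series (fun n => u (S (2 * n))).
Proof.
  intros He Ho Hu.
  assert (Hsplit : forall N, psum u (2 * N) =
            psum (fun n => u (2 * n)%nat) N + psum (fun n => u (S (2 * n))) N).
  { induction N; [simpl; ring |].
    replace (2 * S N)%nat with (S (S (2 * N))) by lia. cbn [psum]. rewrite IHN. ring. }
  assert (Heven : is_lim_seq (fun N => psum u (2 * N)) (Series u)).
  { apply (is_lim_seq_subseq (psum u) _ (fun N => 2 * N)%nat).
    - apply eventually_subseq; intro n; lia.
    - apply is_lim_seq_psum, Hu. }
  apply is_lim_seq_unique in Heven.
  rewrite (is_lim_seq_unique _ _ (is_lim_seq_ext _ _ _ (fun N => eq_sym (Hsplit N))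
             (is_lim_seq_plus' _ _ _ _ (is_lim_seq_psum _ He) (is_lim_seq_psum _ Ho))))
    in Heven.
  injection Heven; auto.
Qed.

(** * The expansion of [PI ^ 2 / sin (PI x) ^ 2] *)

Lemma inv_sq_le p q : 0 < p -> p <= q -> 1 / q ^ 2 <= 1 / p ^ 2.
Proof.
  intros Hp Hpq. unfold Rdiv. rewrite !Rmult_1_l.
  apply Rinv_le_contravar; [apply pow_lt; lra | apply pow_incr; lra].
Qed.

(* Telescoping against [2 / n - 2 / (n + 1)]. *)
Lemma psum_inv_sq_le N : psum (fun n => 1 / (INR n + 1) ^ 2) N <= 2 - 2 / (INR N + 1).
Proof.
  induction N as [|N IH]; [simpl; lra |].
  cbn [psum]. rewrite S_INR.
  assert (Ha : 1 <= INR N + 1) by (generalize (pos_INR N); lra).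
  set (a := INR N + 1) in *.
  assert (Hstep : 2 / a - 2 / (a + 1) - 1 / a ^ 2 = (a - 1) / (a ^ 2 * (a + 1)))
    by (field; lra).
  assert (0 <= (a - 1) / (a ^ 2 * (a + 1))).
  { apply Rdiv_le_0_compat; [lra | apply Rmult_lt_0_compat; [apply pow_lt |]; lra]. }
  lra.
Qed.

Lemma psum_inv_sq_le_2 N : psum (fun n => 1 / (INR n + 1) ^ 2) N <= 2.
Proof.
  generalize (psum_inv_sq_le N).
  assert (0 < 2 / (INR N + 1)) by (apply Rdiv_lt_0_compat; generalize (pos_INR N); lra).
  lra.
Qed.

Definition hurwitz2_term (x : R) (n : nat) : R := 1 / (x + INR n) ^ 2.

Definition hurwitz2 (x : R) : R := Series (hurwitz2_term x).

Lemma hurwitz2_term_pos x n : 0 < x -> 0 < hurwitz2_term x n.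
Proof.
  intro Hx. apply Rdiv_lt_0_compat; [lra | apply pow_lt; generalize (pos_INR n); lra].
Qed.

Lemma hurwitz2_term_antitone x n m :
  0 < x -> (n <= m)%nat -> hurwitz2_term x m <= hurwitz2_term x n.
Proof.
  intros Hx Hnm. apply le_INR in Hnm.
  apply inv_sq_le; generalize (pos_INR n); lra.
Qed.

Lemma hurwitz2_term_S_le x n : 0 < x -> hurwitz2_term x (S n) <= 1 / (INR n + 1) ^ 2.
Proof.
  intro Hx. unfold hurwitz2_term. rewrite S_INR.
  apply inv_sq_le; generalize (pos_INR n); lra.
Qed.

Lemma ex_series_hurwitz2 x : 0 < x -> ex_series (hurwitz2_term x).
Proof.
  intro Hx. apply ex_series_incr_1.
  apply ex_series_nonneg_le with (fun n => 1 / (INR n + 1) ^ 2).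
  - intro n. split; [apply Rlt_le, hurwitz2_term_pos, Hx | apply hurwitz2_term_S_le, Hx].
  - apply ex_series_psum_bounded with 2; [| apply psum_inv_sq_le_2].
    intro n. apply Rlt_le, Rdiv_lt_0_compat; [lra | apply pow_lt; generalize (pos_INR n); lra].
Qed.

Lemma hurwitz2_bounds x : 0 < x -> 1 / x ^ 2 <= hurwitz2 x <= 1 / x ^ 2 + 2.
Proof.
  intro Hx. unfold hurwitz2. rewrite Series_incr_1 by (apply ex_series_hurwitz2, Hx).
  replace (hurwitz2_term x 0) with (1 / x ^ 2) by (unfold hurwitz2_term; simpl; f_equal; ring).
  assert (Htail := proj1 (ex_series_incr_1 _) (ex_series_hurwitz2 x Hx)).
  assert (0 <= Series (fun k => hurwitz2_term x (S k))).
  { apply (psum_le_Series _ 0); auto. intro n. apply Rlt_le, hurwitz2_term_pos, Hx. }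
  assert (Series (fun k => hurwitz2_term x (S k)) <= 2).
  { apply Series_le_bound; [exact Htail |]. intro N.
    apply Rle_trans with (2 := psum_inv_sq_le_2 N), psum_le.
    intro n. apply hurwitz2_term_S_le, Hx. }
  lra.
Qed.

Ltac nonzero := repeat match goal with
  | |- _ /\ _ => split
  | |- _ <> _ => apply Rgt_not_eq end; try nra.

(* Splitting [n] by parity: [x / 2 + n = (x + 2 n) / 2] and
   [(x + 1) / 2 + n = (x + 2 n + 1) / 2]. *)
Lemma hurwitz2_duplication x :
  0 < x -> hurwitz2 (x / 2) + hurwitz2 ((x + 1) / 2) = 4 * hurwitz2 x.
Proof.
  intro Hx. unfold hurwitz2.
  rewrite (Series_ext (hurwitz2_term (x / 2)) (fun n => 4 * hurwitz2_term x (2 * n)%nat)).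
  2: { intro n. unfold hurwitz2_term. rewrite mult_INR. simpl (INR 2).
       generalize (pos_INR n); intro. field; nonzero. }
  rewrite (Series_ext (hurwitz2_term ((x + 1) / 2)) (fun n => 4 * hurwitz2_term x (S (2 * n)))).
  2: { intro n. unfold hurwitz2_term. rewrite S_INR, mult_INR. simpl (INR 2).
       generalize (pos_INR n); intro. field; nonzero. }
  assert (Hsub : forall s : nat -> nat, (forall n, (n <= s n)%nat) ->
            ex_series (fun n => hurwitz2_term x (s n))).
  { intros s Hs. apply ex_series_nonneg_le with (hurwitz2_term x); [| apply ex_series_hurwitz2, Hx].
    intro n. split; [apply Rlt_le, hurwitz2_term_pos, Hx | apply hurwitz2_term_antitone; auto]. }
  rewrite !Series_scal_l, (Series_parity_split (hurwitz2_term x)).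
  - ring.
  - apply Hsub; intro; lia.
  - apply Hsub; intro; lia.
  - apply ex_series_hurwitz2, Hx.
Qed.

Definition csc2pi (x : R) : R := PI ^ 2 / sin (PI * x) ^ 2.

Lemma csc2pi_duplication x : 0 < x < 1 -> csc2pi (x / 2) + csc2pi ((x + 1) / 2) = 4 * csc2pi x.
Proof.
  intro Hx. unfold csc2pi. assert (HPI := PI_RGT_0).
  set (a := PI * x / 2).
  assert (Ha : 0 < a < PI / 2) by (unfold a; split; nra).
  replace (PI * (x / 2)) with a by (unfold a; field).
  replace (PI * ((x + 1) / 2)) with (a + PI / 2) by (unfold a; field).
  replace (PI * x) with (2 * a) by (unfold a; field).
  rewrite sin_plus, sin_PI2, cos_PI2, sin_2a, Rmult_0_r, Rmult_1_r, Rplus_0_l.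
  assert (Hs : 0 < sin a) by (apply sin_gt_0; lra).
  assert (Hc : 0 < cos a) by (apply cos_gt_0; lra).
  assert (Hsc := sin2_cos2 a). unfold Rsqr in Hsc.
  replace (PI ^ 2 / sin a ^ 2 + PI ^ 2 / cos a ^ 2)
    with (PI ^ 2 * (sin a * sin a + cos a * cos a) / (sin a ^ 2 * cos a ^ 2))
    by (field; nonzero).
  rewrite Hsc. field; nonzero.
Qed.

Lemma csc2pi_reflection x : csc2pi (1 - x) = csc2pi x.
Proof.
  unfold csc2pi. replace (PI * (1 - x)) with (PI - PI * x) by ring.
  rewrite sin_PI_x. reflexivity.
Qed.

Lemma sin_ge_cubic t : 0 <= t <= PI -> t - t ^ 3 / 6 <= sin t.
Proof.
  intro Ht. assert (HPI := PI_4).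
  destruct (SIN t) as [Hlb _]; try lra.
  unfold sin_lb, sin_approx, sin_term in Hlb. simpl in Hlb.
  assert (Ht2 : t ^ 2 <= 16) by nra.
  assert (0 <= t ^ 5 * (42 - t ^ 2)) by (apply Rmult_le_pos; [apply pow_le |]; lra).
  nra.
Qed.

(* Upper bound: [sin (PI x) >= PI x (1 - a)] with [a = (PI x) ^ 2 / 6],
   and [(1 + 100 x ^ 2) (1 - a) ^ 2 >= 1]. *)
Lemma csc2pi_bounds x : 0 < x <= 1 / 2 -> 1 / x ^ 2 <= csc2pi x <= 1 / x ^ 2 + 100.
Proof.
  intro Hx. unfold csc2pi. assert (HPI := PI_RGT_0). assert (HPI4 := PI_4).
  assert (HPI2 := PI2_3_2).
  set (t := PI * x).
  assert (Ht : 0 < t <= 2) by (unfold t; split; nra).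
  assert (Hlt : sin t < t) by (apply sin_lt_x; lra).
  set (a := t ^ 2 / 6).
  assert (Ha : 0 <= a <= 2 / 3) by (unfold a; split; nra).
  assert (Hsin : t * (1 - a) <= sin t).
  { replace (t * (1 - a)) with (t - t ^ 3 / 6) by (unfold a; field). apply sin_ge_cubic; lra. }
  assert (Hpos : 0 < t * (1 - a)) by nra.
  assert (Hx2 : 0 < x ^ 2) by (apply pow_lt; lra).
  assert (Hs2 : 0 < sin t ^ 2) by (apply pow_lt; lra).
  split.
  - replace (PI ^ 2) with ((t / x) ^ 2) by (unfold t; field; lra).
    apply Rmult_le_reg_r with (sin t ^ 2); [exact Hs2 |].
    replace ((t / x) ^ 2 / sin t ^ 2 * sin t ^ 2) with (1 / x ^ 2 * t ^ 2) by (field; lra).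
    apply Rmult_le_compat_l; [apply Rlt_le, Rdiv_lt_0_compat; lra |].
    apply pow_incr; lra.
  - assert (Harith : 1 <= (1 + 100 * x ^ 2) * (1 - a) ^ 2).
    { assert (HPIsq : PI ^ 2 <= 16) by nra.
      assert (Hax : a <= 8 * x ^ 2 / 3) by (unfold a, t; nra).
      destruct (Rle_dec a (1 / 4)); [assert ((1 - a) ^ 2 >= 1 - 2 * a) |
                                      assert ((1 - a) ^ 2 >= 1 / 9)]; nra. }
    apply Rmult_le_reg_r with (sin t ^ 2); [exact Hs2 |].
    replace (PI ^ 2 / sin t ^ 2 * sin t ^ 2) with (PI ^ 2) by (field; lra).
    apply Rle_trans with ((1 / x ^ 2 + 100) * (t * (1 - a)) ^ 2).
    + replace ((1 / x ^ 2 + 100) * (t * (1 - a)) ^ 2)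
        with (PI ^ 2 * ((1 + 100 * x ^ 2) * (1 - a) ^ 2)) by (unfold t; field; lra).
      nra.
    + apply Rmult_le_compat_l; [assert (0 < 1 / x ^ 2) by (apply Rdiv_lt_0_compat; lra); lra |].
      apply pow_incr; lra.
Qed.

(* Herglotz's trick: iterating the duplication law gives [|D x| <= C / 2 ^ n] for every [n]. *)
Lemma duplication_bounded_zero (D : R -> R) (C : R) :
  (forall x, 0 < x < 1 -> Rabs (D x) <= C) ->
  (forall x, 0 < x < 1 -> D (x / 2) + D ((x + 1) / 2) = 4 * D x) ->
  forall x, 0 < x < 1 -> D x = 0.
Proof.
  intros Hbound Hdup.
  assert (Hiter : forall n x, 0 < x < 1 -> Rabs (D x) <= C * (1 / 2) ^ n).
  { induction n as [|n IH]; intros x Hx; [rewrite pow_O, Rmult_1_r; auto |].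
    replace (D x) with ((D (x / 2) + D ((x + 1) / 2)) / 4) by (rewrite Hdup; auto; field).
    unfold Rdiv at 1. rewrite Rabs_mult, (Rabs_right (/ 4)) by lra.
    assert (T := Rabs_triang (D (x / 2)) (D ((x + 1) / 2))).
    assert (H1 := IH (x / 2) ltac:(lra)). assert (H2 := IH ((x + 1) / 2) ltac:(lra)).
    simpl. lra. }
  intros x Hx. apply Rabs_eq_0, Rle_antisym; [| apply Rabs_pos].
  assert (Hgeom : is_lim_seq (fun n => C * (1 / 2) ^ n) 0).
  { replace (Finite 0) with (Rbar_mult C 0) by (simpl; f_equal; ring).
    apply is_lim_seq_scal_l, is_lim_seq_geom. rewrite Rabs_pos_eq; lra. }
  exact (is_lim_seq_le _ _ _ _ (fun n => Hiter n x Hx) (is_lim_seq_const _) Hgeom).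
Qed.

Lemma hurwitz2_reflection x : 0 < x < 1 -> hurwitz2 x + hurwitz2 (1 - x) = csc2pi x.
Proof.
  intro Hx.
  set (D := fun y => hurwitz2 y + hurwitz2 (1 - y) - csc2pi y).
  assert (Hhalf : forall y, 0 < y <= 1 / 2 -> Rabs (D y) <= 100).
  { intros y Hy. unfold D.
    assert (B1 := hurwitz2_bounds y ltac:(lra)).
    assert (B2 := hurwitz2_bounds (1 - y) ltac:(lra)).
    assert (B3 := csc2pi_bounds y Hy).
    assert (0 <= 1 / (1 - y) ^ 2) by (apply Rlt_le, Rdiv_lt_0_compat; [| apply pow_lt]; lra).
    assert (1 / (1 - y) ^ 2 <= 4).
    { apply Rmult_le_reg_r with ((1 - y) ^ 2); [apply pow_lt; lra |].
      replace (1 / (1 - y) ^ 2 * (1 - y) ^ 2) with 1 by (field; lra). nra. }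
    apply Rabs_le. lra. }
  assert (Hsym : forall y, D (1 - y) = D y).
  { intro y. unfold D. rewrite csc2pi_reflection. replace (1 - (1 - y)) with y by ring. ring. }
  assert (HD : D x = 0).
  { apply (duplication_bounded_zero D 100); auto.
    - intros y Hy. destruct (Rle_dec y (1 / 2)); [apply Hhalf; lra |].
      rewrite <- Hsym. apply Hhalf. lra.
    - intros y Hy. unfold D.
      replace (1 - y / 2) with (((1 - y) + 1) / 2) by field.
      replace (1 - (y + 1) / 2) with ((1 - y) / 2) by field.
      assert (E1 := hurwitz2_duplication y ltac:(lra)).
      assert (E2 := hurwitz2_duplication (1 - y) ltac:(lra)).
      assert (E3 := csc2pi_duplication y Hy).
      lra. }
  unfold D in HD. lra.
Qed.

(** * Convexity and majorization *)

Lemma Rpower_pos w p : 0 < Rpower w p.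
Proof. apply exp_pos. Qed.

Lemma Rpower_pred w p : 0 < w -> Rpower w p = Rpower w (p - 1) * w.
Proof.
  intro Hw. rewrite <- (Rpower_1 w) at 3 by exact Hw.
  rewrite <- Rpower_plus. f_equal. ring.
Qed.

Lemma rpow_nonneg w p : 0 <= rpow w p.
Proof. unfold rpow. destruct (Req_EM_T w 0); [lra | apply Rlt_le, Rpower_pos]. Qed.

Lemma rpow_pos_eq w p : w <> 0 -> rpow w p = Rpower w p.
Proof. intro Hw. unfold rpow. destruct (Req_EM_T w 0); [contradiction | reflexivity]. Qed.

Lemma Rpower_1_base p : Rpower 1 p = 1.
Proof. unfold Rpower. rewrite ln_1, Rmult_0_r. apply exp_0. Qed.

Lemma rpow_le_self w p : 1 <= p -> 0 <= w <= 1 -> rpow w p <= w.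
Proof.
  intros Hp Hw. unfold rpow. destruct (Req_EM_T w 0); [lra |].
  rewrite Rpower_pred by lra.
  assert (Rpower w (p - 1) <= Rpower 1 (p - 1)) by (apply Rle_Rpower_l; lra).
  rewrite Rpower_1_base in *.
  assert (0 < Rpower w (p - 1)) by apply Rpower_pos.
  nra.
Qed.

(* From [exp u >= 1 + u] at [u = (p - 1) ln t] and at [u = - ln t]. *)
Lemma Rpower_bernoulli t p : 0 < t -> 1 <= p -> 1 + p * (t - 1) <= Rpower t p.
Proof.
  intros Ht Hp. rewrite Rpower_pred by exact Ht.
  assert (E1 : 1 + (p - 1) * ln t <= Rpower t (p - 1)) by apply exp_ineq1_le.
  assert (E2 : 1 - ln t <= / t).
  { rewrite <- (exp_ln (/ t)), ln_Rinv by (try apply Rinv_0_lt_compat; exact Ht).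
    replace (1 - ln t) with (1 + - ln t) by ring. apply exp_ineq1_le. }
  assert (E3 : t - 1 <= t * ln t).
  { apply Rmult_le_compat_l with (r := t) in E2; [| lra].
    rewrite Rinv_r in E2 by lra. nra. }
  nra.
Qed.

Lemma rpow_tangent p a b : 1 <= p -> 0 <= a -> 0 < b ->
  rpow b p + p * Rpower b (p - 1) * (a - b) <= rpow a p.
Proof.
  intros Hp Ha Hb. rewrite (rpow_pos_eq b) by lra.
  assert (Hbp := Rpower_pos b (p - 1)).
  rewrite (Rpower_pred b p) by exact Hb.
  unfold rpow. destruct (Req_EM_T a 0) as [-> | Ha0].
  - assert (0 < Rpower b (p - 1) * b) by (apply Rmult_lt_0_compat; lra). nra.
  - assert (Hab : 0 < a / b) by (apply Rdiv_lt_0_compat; lra).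
    assert (Hbern := Rpower_bernoulli (a / b) p Hab Hp).
    assert (Ea : Rpower a p = Rpower (a / b) p * Rpower b p).
    { rewrite Rpower_mult_distr by lra. f_equal. field. lra. }
    rewrite Ea, (Rpower_pred b p) by exact Hb.
    replace (Rpower b (p - 1) * b + p * Rpower b (p - 1) * (a - b))
      with ((1 + p * (a / b - 1)) * (Rpower b (p - 1) * b)) by (field; lra).
    apply Rmult_le_compat_r; [nra | exact Hbern].
Qed.

Lemma psum_mul_antitone_ge d e N :
  (forall i, 0 <= d i) -> (forall i, d (S i) <= d i) -> (forall n, 0 <= psum e n) ->
  d N * psum e N <= psum (fun i => d i * e i) N.
Proof.
  intros Hd Hdec He. induction N as [|N IH]; [simpl; lra |].
  cbn [psum]. specialize (Hdec N). specialize (He (S N)). cbn [psum] in He.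
  assert ((d N - d (S N)) * (psum e N + e N) >= 0) by nra.
  nra.
Qed.

(* The Tomic-Weyl inequality; [dg] plays the role of the derivative of [g].  The proof
   sums the tangent-line inequalities at the [b i] and uses Abel summation. *)
Lemma psum_convex_submajorization (g dg : R -> R) (a b : nat -> R) N :
  (forall s t, 0 <= s -> 0 < t -> g t + dg t * (s - t) <= g s) ->
  (forall t, 0 < t -> 0 <= dg t) ->
  (forall s t, 0 < s <= t -> dg s <= dg t) ->
  (forall i, 0 <= a i) -> (forall i, 0 < b i) -> (forall i, b (S i) <= b i) ->
  (forall n, psum b n <= psum a n) ->
  psum (fun i => g (b i)) N <= psum (fun i => g (a i)) N.
Proof.
  intros Htan Hdg_nonneg Hdg_mono Ha Hb Hb_dec Hmaj.
  assert (Hlin : psum (fun i => g (b i)) N + psum (fun i => dg (b i) * (a i - b i)) N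
                 <= psum (fun i => g (a i)) N).
  { rewrite <- psum_plus. apply psum_le. intro i. apply Htan; auto. }
  assert (Habel : dg (b N) * psum (fun i => a i - b i) N
                  <= psum (fun i => dg (b i) * (a i - b i)) N).
  { apply (psum_mul_antitone_ge (fun i => dg (b i)) (fun i => a i - b i)).
    - intro i. apply Hdg_nonneg, Hb.
    - intro i. apply Hdg_mono. split; [apply Hb | apply Hb_dec].
    - intro n. rewrite psum_minus. specialize (Hmaj n). lra. }
  assert (0 <= dg (b N) * psum (fun i => a i - b i) N).
  { apply Rmult_le_pos; [apply Hdg_nonneg, Hb |].
    rewrite psum_minus. specialize (Hmaj N). lra. }
  lra.
Qed.

Definition interleave (f g : nat -> R) (i : nat) : R :=
  if Nat.even i then f (Nat.div2 i) else g (Nat.div2 i).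

Lemma interleave_double f g N : interleave f g (2 * N) = f N.
Proof. unfold interleave. rewrite Nat.even_mul, Nat.div2_double. reflexivity. Qed.

Lemma interleave_double_S f g N : interleave f g (S (2 * N)) = g N.
Proof.
  unfold interleave. rewrite Nat.even_succ, Nat.odd_mul, Nat.div2_succ_double. reflexivity.
Qed.

Lemma interleave_comp (h : R -> R) f g i :
  h (interleave f g i) = interleave (fun k => h (f k)) (fun k => h (g k)) i.
Proof. unfold interleave. destruct (Nat.even i); reflexivity. Qed.

Lemma interleave_diag c i : interleave c c i = c (Nat.div2 i).
Proof. unfold interleave. destruct (Nat.even i); reflexivity. Qed.

Lemma psum_interleave f g N : psum (interleave f g) (2 * N) = psum f N + psum g N.
Proof.
  induction N as [|N IH]; [simpl; ring |].
  replace (2 * S N)%nat with (S (S (2 * N))) by lia. cbn [psum].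
  rewrite IH, interleave_double, interleave_double_S. ring.
Qed.

(* Once the pair sums [u k + v k] fall below [c k + c k] (from [k = 1] on), the partial
   sums of [u + v - 2 c] decrease to their limit [0], hence stay nonnegative. *)
Lemma interleave_submajorization (u v c : nat -> R) :
  ex_series u -> ex_series v -> ex_series c ->
  Series u + Series v = Series c + Series c ->
  (forall k, v k <= c k) ->
  (forall k, (1 <= k)%nat -> u k + v k <= c k + c k) ->
  forall n, psum (interleave c c) n <= psum (interleave u v) n.
Proof.
  intros Hu Hv Hc Htot Hvc Hpair.
  set (e := fun k => u k + v k - (c k + c k)).
  assert (Hpsum_e : forall N, psum e N = psum u N + psum v N - (psum c N + psum c N)).
  { intro N. unfold e. rewrite psum_minus, !psum_plus. reflexivity. }
  assert (He : is_lim_seq (psum e) 0).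
  { apply (is_lim_seq_ext _ _ _ (fun N => eq_sym (Hpsum_e N))).
    replace (Finite 0) with (Finite (Series u + Series v - (Series c + Series c)))
      by (f_equal; lra).
    apply is_lim_seq_minus'; apply is_lim_seq_plus'; apply is_lim_seq_psum; auto. }
  assert (Hpos : forall N, (1 <= N)%nat -> psum u N + psum v N - (psum c N + psum c N) >= 0).
  { intros N HN. rewrite <- Hpsum_e. apply Rle_ge.
    apply (is_lim_seq_psum_le_of_nonpos_tail e 0 He); auto.
    intros k Hk. unfold e. specialize (Hpair k Hk). lra. }
  intro n. destruct (Nat.Even_or_Odd n) as [[N ->] | [N ->]].
  - rewrite !psum_interleave. destruct N as [|N]; [simpl; lra |].
    specialize (Hpos (S N) ltac:(lia)). lra.
  - replace (2 * N + 1)%nat with (S (2 * N)) by lia. cbn [psum].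
    rewrite !psum_interleave, !interleave_double.
    specialize (Hpos (S N) ltac:(lia)). cbn [psum] in Hpos.
    specialize (Hvc N). lra.
Qed.

(** * The weights [sinc (x + k) ^ 2] *)

Lemma sinc_even y : sinc (- y) = sinc y.
Proof.
  unfold sinc. destruct (Req_EM_T (- y) 0) as [Hny | Hny], (Req_EM_T y 0) as [Hy | Hy];
    try reflexivity; try lra.
  replace (PI * - y) with (- (PI * y)) by ring. rewrite sin_neg.
  field. split; [exact Hy | apply PI_neq0].
Qed.

Lemma sinc_sq_eq y : y <> 0 -> sinc y ^ 2 = sin (PI * y) ^ 2 / PI ^ 2 * (1 / y ^ 2).
Proof.
  intro Hy. unfold sinc. destruct (Req_EM_T y 0); [contradiction |].
  field. split; [exact Hy | apply PI_neq0].
Qed.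

Lemma sin_sq_le_sq t : sin t ^ 2 <= t ^ 2.
Proof.
  assert (Hpos : forall t, 0 < t -> sin t ^ 2 <= t ^ 2).
  { intros s Hs. destruct (Rle_dec s 1).
    - assert (HPI := PI2_3_2).
      assert (0 < sin s) by (apply sin_gt_0; lra).
      assert (sin s < s) by (apply sin_lt_x, Hs).
      apply pow_incr; lra.
    - assert (Hb := SIN_bound s). nra. }
  destruct (Rtotal_order t 0) as [Ht | [-> | Ht]].
  - replace t with (- (- t)) by ring. rewrite sin_neg.
    replace ((- sin (- t)) ^ 2) with (sin (- t) ^ 2) by ring.
    replace ((- - t) ^ 2) with ((- t) ^ 2) by ring. apply Hpos. lra.
  - rewrite sin_0. lra.
  - apply Hpos, Ht.
Qed.

Lemma sinc_sq_le_1 y : sinc y ^ 2 <= 1.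
Proof.
  destruct (Req_dec y 0) as [Hy | Hy].
  - unfold sinc. destruct (Req_EM_T y 0); [lra | contradiction].
  - rewrite sinc_sq_eq by exact Hy.
    assert (Hpy : 0 < (PI * y) ^ 2).
    { rewrite <- Rsqr_pow2. apply Rsqr_pos_lt, Rmult_integral_contrapositive.
      split; [apply PI_neq0 | exact Hy]. }
    replace (sin (PI * y) ^ 2 / PI ^ 2 * (1 / y ^ 2)) with (sin (PI * y) ^ 2 / (PI * y) ^ 2)
      by (field; split; [exact Hy | apply PI_neq0]).
    apply Rmult_le_reg_r with ((PI * y) ^ 2); [exact Hpy |].
    unfold Rdiv. rewrite Rmult_assoc, Rinv_l, Rmult_1_r, Rmult_1_l by lra.
    apply sin_sq_le_sq.
Qed.

Lemma sin_sq_shift y k : sin (PI * (y + INR k)) ^ 2 = sin (PI * y) ^ 2.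
Proof.
  induction k as [|k IH]; [simpl; rewrite Rplus_0_r; reflexivity |].
  rewrite S_INR. replace (PI * (y + (INR k + 1))) with (PI * (y + INR k) + PI) by ring.
  rewrite neg_sin, <- IH. ring.
Qed.

(* By evenness of [sinc], the terms of [f_r] with [m < 0] are [sincsq (1 - x)]. *)
Definition sincsq (x : R) (k : nat) : R := sinc (x + INR k) ^ 2.

Lemma sincsq_nonneg x k : 0 <= sincsq x k.
Proof. apply pow2_ge_0. Qed.

Lemma sincsq_le_1 x k : sincsq x k <= 1.
Proof. apply sinc_sq_le_1. Qed.

Lemma sincsq_eq x k : 0 < x -> sincsq x k = sin (PI * x) ^ 2 / PI ^ 2 * hurwitz2_term x k.
Proof.
  intro Hx. unfold sincsq. rewrite sinc_sq_eq by (generalize (pos_INR k); lra).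
  rewrite sin_sq_shift. reflexivity.
Qed.

Lemma sincsq_S x k : sincsq x (S k) = sincsq (x + 1) k.
Proof. unfold sincsq. rewrite S_INR. f_equal. f_equal. ring. Qed.

Lemma sincsq_1 k : sincsq 1 k = 0.
Proof.
  rewrite sincsq_eq by lra. replace (PI * 1) with PI by ring.
  rewrite sin_PI. unfold Rdiv. ring.
Qed.

Lemma ex_series_sincsq x : 0 <= x -> ex_series (sincsq x).
Proof.
  intro Hx. apply ex_series_incr_1.
  apply (ex_series_ext (fun k => sin (PI * (x + 1)) ^ 2 / PI ^ 2 * hurwitz2_term (x + 1) k)).
  - intro k. rewrite sincsq_S, sincsq_eq by lra. reflexivity.
  - apply (ex_series_scal_l (sin (PI * (x + 1)) ^ 2 / PI ^ 2) (hurwitz2_term (x + 1))).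
    apply ex_series_hurwitz2. lra.
Qed.

Lemma Series_sincsq_reflection x : 0 <= x < 1 -> Series (sincsq x) + Series (sincsq (1 - x)) = 1.
Proof.
  intro Hx. destruct (Req_dec x 0) as [-> | Hx0].
  - rewrite Rminus_0_r, Series_incr_1 by (apply ex_series_sincsq; lra).
    rewrite (Series_ext (fun k => sincsq 0 (S k)) (fun _ => 0))
      by (intro k; rewrite sincsq_S, Rplus_0_l; apply sincsq_1).
    rewrite (Series_ext (sincsq 1) (fun _ => 0)) by exact sincsq_1.
    rewrite Series_zero, !Rplus_0_r.
    unfold sincsq, sinc. simpl (INR 0). rewrite Rplus_0_r.
    destruct (Req_EM_T 0 0); [ring | contradiction].
  - assert (Hxpos : 0 < x) by (destruct Hx as [[Hx' | Hx'] _]; [exact Hx' | congruence]).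
    assert (HPI := PI_RGT_0).
    assert (Hs : 0 < sin (PI * x)) by (apply sin_gt_0; nra).
    rewrite (Series_ext _ _ (fun k => sincsq_eq x k Hxpos)).
    rewrite (Series_ext _ _ (fun k => sincsq_eq (1 - x) k ltac:(lra))), !Series_scal_l.
    replace (PI * (1 - x)) with (PI - PI * x) by ring. rewrite sin_PI_x.
    rewrite <- Rmult_plus_distr_l.
    change (sin (PI * x) ^ 2 / PI ^ 2 * (hurwitz2 x + hurwitz2 (1 - x)) = 1).
    rewrite hurwitz2_reflection by lra. unfold csc2pi.
    field. split; apply Rgt_not_eq; lra.
Qed.

Lemma sincsq_half k : sincsq (1 / 2) k = / PI ^ 2 * hurwitz2_term (1 / 2) k.
Proof.
  rewrite sincsq_eq by lra. replace (PI * (1 / 2)) with (PI / 2) by field.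
  rewrite sin_PI2. unfold Rdiv. ring.
Qed.

Lemma sincsq_half_pos k : 0 < sincsq (1 / 2) k.
Proof.
  rewrite sincsq_half. apply Rmult_lt_0_compat.
  - apply Rinv_0_lt_compat, pow_lt, PI_RGT_0.
  - apply hurwitz2_term_pos. lra.
Qed.

Lemma sincsq_antitone x n m : 0 < x -> (n <= m)%nat -> sincsq x m <= sincsq x n.
Proof.
  intros Hx Hnm. rewrite !sincsq_eq by exact Hx.
  apply Rmult_le_compat_l; [| apply hurwitz2_term_antitone; auto].
  apply Rmult_le_pos; [apply pow2_ge_0 | apply Rlt_le, Rinv_0_lt_compat, pow_lt, PI_RGT_0].
Qed.

Lemma sincsq_reflect_le_half x k : 0 <= x <= 1 / 2 -> sincsq (1 - x) k <= sincsq (1 / 2) k.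
Proof.
  intro Hx. rewrite sincsq_half, sincsq_eq by lra.
  assert (HPI : 0 < / PI ^ 2) by apply Rinv_0_lt_compat, pow_lt, PI_RGT_0.
  assert (Hsin := SIN_bound (PI * (1 - x))).
  unfold Rdiv. rewrite Rmult_comm with (r1 := sin (PI * (1 - x)) ^ 2).
  apply Rmult_le_compat; try lra.
  - apply Rmult_le_pos; [lra | apply pow2_ge_0].
  - apply Rlt_le, hurwitz2_term_pos. lra.
  - replace (/ PI ^ 2) with (/ PI ^ 2 * 1) at 2 by ring.
    apply Rmult_le_compat_l; [lra |]. nra.
  - unfold hurwitz2_term. apply inv_sq_le; generalize (pos_INR k); lra.
Qed.

Lemma sin_ge_linear t : 0 <= t <= 2 -> 2 / 5 * t <= sin t.
Proof.
  intro Ht. assert (HPI := PI2_3_2).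
  destruct (SIN t) as [Hlb _]; try lra.
  unfold sin_lb, sin_approx, sin_term in Hlb. simpl in Hlb.
  assert (Hs : 0 <= t ^ 2 <= 4) by nra.
  assert (0 <= 3 / 5 - t ^ 2 / 6 + (t ^ 2) ^ 2 / 120 - (t ^ 2) ^ 3 / 5040) by nra.
  nra.
Qed.

Lemma sin_sq_lower y : 0 <= y <= 1 / 2 -> 4 / 3 * y ^ 2 <= sin (PI * y) ^ 2.
Proof.
  intro Hy. assert (HPI := PI2_3_2). assert (HPI4 := PI_4).
  assert (Hlin := sin_ge_linear (PI * y) ltac:(split; nra)).
  assert (6 / 5 * y <= sin (PI * y)) by nra.
  assert ((6 / 5 * y) ^ 2 <= sin (PI * y) ^ 2) by (apply pow_incr; lra).
  nra.
Qed.

(* With [j - y = x + k] and [j + y = 1 - x + k] this compares the pair [(x + k, 1 - x + k)]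
   with two copies of [1/2 + k]; the loss of [sin (PI x) ^ 2 = 1 - s] below [1] pays for
   the convexity of [t |-> 1 / t ^ 2]. *)
Lemma inv_sq_pair_le j y s : 3 / 2 <= j -> 0 <= y <= 1 / 2 -> 4 / 3 * y ^ 2 <= s -> s <= 1 ->
  (1 - s) * (1 / (j - y) ^ 2 + 1 / (j + y) ^ 2) <= 2 / j ^ 2.
Proof.
  intros Hj Hy Hs1 Hs2.
  assert (Hd : 0 < j ^ 2 - y ^ 2) by nra.
  replace ((1 - s) * (1 / (j - y) ^ 2 + 1 / (j + y) ^ 2))
    with ((1 - s) * 2 * (j ^ 2 + y ^ 2) / (j ^ 2 - y ^ 2) ^ 2) by (field; nonzero).
  apply Rmult_le_reg_r with ((j ^ 2 - y ^ 2) ^ 2 * j ^ 2).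
  { apply Rmult_lt_0_compat; [apply pow_lt |]; nra. }
  replace ((1 - s) * 2 * (j ^ 2 + y ^ 2) / (j ^ 2 - y ^ 2) ^ 2 * ((j ^ 2 - y ^ 2) ^ 2 * j ^ 2))
    with ((1 - s) * 2 * (j ^ 2 + y ^ 2) * j ^ 2) by (field; nonzero).
  replace (2 / j ^ 2 * ((j ^ 2 - y ^ 2) ^ 2 * j ^ 2)) with (2 * (j ^ 2 - y ^ 2) ^ 2)
    by (field; nonzero).
  assert (Hj2 : 9 / 4 <= j ^ 2) by nra.
  assert (0 <= y ^ 2) by nra.
  assert (Hsj : 3 * y ^ 2 <= s * j ^ 2) by nra.
  assert (0 <= (s * j ^ 2 - 3 * y ^ 2) * j ^ 2 + s * y ^ 2 * j ^ 2 + y ^ 4) by nra.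
  nra.
Qed.

Lemma sincsq_pair_le x k : 0 <= x <= 1 / 2 -> (1 <= k)%nat ->
  sincsq x k + sincsq (1 - x) k <= sincsq (1 / 2) k + sincsq (1 / 2) k.
Proof.
  intros Hx Hk. assert (Hc := sincsq_half_pos k).
  destruct (Req_dec x 0) as [-> | Hx0].
  - destruct k as [|k]; [lia |].
    rewrite Rminus_0_r, sincsq_S, Rplus_0_l, !sincsq_1. lra.
  - assert (Hxpos : 0 < x) by (destruct Hx as [[Hx' | Hx'] _]; [exact Hx' | congruence]).
    set (y := 1 / 2 - x). set (j := 1 / 2 + INR k).
    assert (Hj : 3 / 2 <= j) by (unfold j; apply le_INR in Hk; simpl in Hk; lra).
    assert (Hsin : sin (PI * x) ^ 2 = 1 - sin (PI * y) ^ 2).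
    { unfold y. replace (PI * (1 / 2 - x)) with (PI / 2 - PI * x) by field.
      rewrite sin_shift. generalize (sin2_cos2 (PI * x)). unfold Rsqr. lra. }
    assert (Hsy := sin_sq_lower y ltac:(unfold y; lra)).
    assert (Hsy1 : sin (PI * y) ^ 2 <= 1) by (generalize (SIN_bound (PI * y)); nra).
    assert (Hpair := inv_sq_pair_le j y (sin (PI * y) ^ 2) Hj ltac:(unfold y; lra) Hsy Hsy1).
    rewrite sincsq_half, !sincsq_eq by lra.
    replace (PI * (1 - x)) with (PI - PI * x) by ring. rewrite sin_PI_x, Hsin.
    unfold hurwitz2_term.
    replace (x + INR k) with (j - y) by (unfold j, y; lra).
    replace (1 - x + INR k) with (j + y) by (unfold j, y; lra).
    replace (1 / 2 + INR k) with j by reflexivity.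
    assert (HPI : 0 < / PI ^ 2) by apply Rinv_0_lt_compat, pow_lt, PI_RGT_0.
    assert (Hscaled := Rmult_le_compat_l (/ PI ^ 2) _ _ (Rlt_le _ _ HPI) Hpair).
    unfold Rdiv in *. lra.
Qed.

Lemma term_eq r y : term r y = rpow (sinc y ^ 2) r.
Proof.
  unfold term, rpow. rewrite <- pow2_abs.
  destruct (Req_EM_T (Rabs (sinc y)) 0) as [H | H].
  - rewrite H. destruct (Req_EM_T (0 ^ 2) 0); [reflexivity | simpl in *; lra].
  - assert (Hp : 0 < Rabs (sinc y)) by (generalize (Rabs_pos (sinc y)); lra).
    destruct (Req_EM_T (Rabs (sinc y) ^ 2) 0) as [H2 | _].
    { exact (False_ind _ (pow_nonzero _ 2 H H2)). }
    unfold Rpower. f_equal. rewrite ln_pow by exact Hp. simpl (INR 2). ring.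
Qed.

Lemma f_r_eq r x :
  f_r r x = Series (fun k => rpow (sincsq x k) r) + Series (fun k => rpow (sincsq (1 - x) k) r).
Proof.
  unfold f_r. f_equal; apply Series_ext; intro k; rewrite term_eq; [reflexivity |].
  unfold sincsq. rewrite <- sinc_even. do 3 f_equal. rewrite S_INR. ring.
Qed.

Lemma f_r_reflection r x : f_r r (1 - x) = f_r r x.
Proof. rewrite !f_r_eq. replace (1 - (1 - x)) with x by ring. apply Rplus_comm. Qed.

Lemma ex_series_rpow_sincsq r x : 1 <= r -> 0 <= x -> ex_series (fun k => rpow (sincsq x k) r).
Proof.
  intros Hr Hx. apply ex_series_nonneg_le with (sincsq x); [| apply ex_series_sincsq, Hx].
  intro k. split; [apply rpow_nonneg |].
  apply rpow_le_self; [exact Hr | split; [apply sincsq_nonneg | apply sincsq_le_1]].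
Qed.

Lemma f_r_half_le r x : 1 <= r -> 0 <= x <= 1 / 2 -> f_r r (1 / 2) <= f_r r x.
Proof.
  intros Hr Hx. rewrite !f_r_eq. replace (1 - 1 / 2) with (1 / 2) by field.
  set (u := sincsq x). set (v := sincsq (1 - x)). set (c := sincsq (1 / 2)).
  assert (Htot : Series u + Series v = Series c + Series c).
  { assert (Hhalf := Series_sincsq_reflection (1 / 2) ltac:(lra)).
    replace (1 - 1 / 2) with (1 / 2) in Hhalf by field.
    unfold u, v, c. rewrite Series_sincsq_reflection, Hhalf by lra. reflexivity. }
  assert (Hmaj := interleave_submajorization u v c
    (ex_series_sincsq x ltac:(lra)) (ex_series_sincsq (1 - x) ltac:(lra))
    (ex_series_sincsq (1 / 2) ltac:(lra)) Htot
    (fun k => sincsq_reflect_le_half x k Hx) (fun k Hk => sincsq_pair_le x k Hx Hk)).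
  apply Series_plus_le_psum; try (apply ex_series_rpow_sincsq; lra).
  intro N. rewrite <- !psum_interleave.
  set (g := fun w => rpow w r).
  rewrite (psum_ext _ _ _ (fun i => eq_sym (interleave_comp g c c i))).
  rewrite (psum_ext _ _ _ (fun i => eq_sym (interleave_comp g u v i))).
  apply (psum_convex_submajorization g (fun w => r * Rpower w (r - 1))).
  - intros s t Hs Ht. apply rpow_tangent; auto.
  - intros t Ht. assert (Hpow := Rpower_pos t (r - 1)). nra.
  - intros s t Hst. apply Rmult_le_compat_l; [lra |]. apply Rle_Rpower_l; lra.
  - intro i. unfold interleave. destruct (Nat.even i); apply sincsq_nonneg.
  - intro i. rewrite interleave_diag. apply sincsq_half_pos.
  - intro i. rewrite !interleave_diag. apply sincsq_antitone; [lra |].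
    apply Nat.div2_le_mono. lia.
  - exact Hmaj.
Qed.

Theorem proposition1 (r : R) (hr : 1 <= r) (x : R) (hx0 : 0 <= x) (hx1 : x <= 1) :
  f_r r (1 / 2) <= f_r r x.
Proof.
  destruct (Rle_dec x (1 / 2)).
  - apply f_r_half_le; lra.
  - rewrite <- (f_r_reflection r x). apply f_r_half_le; lra.
Qed.
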